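(* Let $n>k\ge 1$ and $d\ge 2$ be integers with $J:=n-k-d+2\ge 1$. Consider a bipartite graph $\mathcal{T}$ with $n$ variable nodes (VNs) and $n-k$ check nodes (CNs). (a) (Necessity.) Let $\mathbf{H}\in\mathbb{F}_q^{(n-k)\times n}$ have full row rank and let $\mathcal{T}$ be its Tanner graph. If the code $\mathcal{C}=\{\mathbf{y}\in\mathbb{F}_q^n:\mathbf{y}\mathbf{H}^T=\mathbf{0}\}$ (of dimension $k$) has minimum distance at least $d$, then for every $\gamma\in[J,n-k]$, every set of $\gamma$ CNs of $\mathcal{T}$ is adjacent to at least $\gamma+k$ VNs. (b) (Sufficiency.) Conversely, if for every $\gamma\in[J,n-k]$ every set of $\gamma$ CNs of $\mathcal{T}$ is adjacent to at least $\gamma+k$ VNs, then for all sufficiently large $q$ there exists a matrix $\mathbf{H}\in\mathbb{F}_q^{(n-k)\times n}$ whose Tanner graph is $\mathcal{T}$ such that the code $\{\mathbf{y}\in\mathbb{F}_q^n:\mathbf{y}\mathbf{H}^T=\mathbf{0}\}$ has minimum distance at least $d$.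
   Context: The Tanner graph of a matrix $\mathbf{H}\in\mathbb{F}_q^{(n-k)\times n}$ is the bipartite graph with variable nodes $1,\dots,n$ (columns) and check nodes $1,\dots,n-k$ (rows), where VN $i$ is adjacent to CN $j$ iff $H_{j,i}\neq 0$. A set of CNs is said to cover (be adjacent to) the set of VNs adjacent to at least one of its members. $[a,b]=\{a,\dots,b\}$. *)

From HB Require Import structures.
From mathcomp Require Import all_boot all_order all_algebra all_field.
Set Implicit Arguments. Unset Strict Implicit. Unset Printing Implicit Defensive.
Import GRing.Theory.
Local Open Scope ring_scope.

(* A bipartite graph with m check nodes and n variable nodes:
   T j i = true iff CN j is adjacent to VN i. *)
Definition bigraph (m n : nat) := 'I_m -> 'I_n -> bool.

Definition is_tanner (F : fieldType) (m n : nat) (H : 'M[F]_(m, n))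
  (T : bigraph m n) : Prop :=
  forall (j : 'I_m) (i : 'I_n), T j i = (H j i != 0).

Definition nbhd (m n : nat) (T : bigraph m n) (S : {set 'I_m}) : {set 'I_n} :=
  [set i | [exists j in S, T j i]].

Definition wt (F : fieldType) (n : nat) (y : 'rV[F]_n) : nat :=
  #|[set i : 'I_n | y 0 i != 0]|.

Definition min_dist_ge (F : fieldType) (m n : nat) (H : 'M[F]_(m, n)) (d : nat)
  : Prop :=
  forall y : 'rV[F]_n, y *m H^T = 0 -> y != 0 -> (d <= wt y)%N.

Definition cover_cond (m n : nat) (T : bigraph m n) (k J : nat) : Prop :=
  forall S : {set 'I_m}, (J <= #|S| <= m)%N -> (#|S| + k <= #|nbhd T S|)%N.

From HB Require Import structures.
From mathcomp Require Import all_boot all_order all_algebra all_field.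
From mathcomp Require Import zify.
Set Implicit Arguments. Unset Strict Implicit. Unset Printing Implicit Defensive.
Import GRing.Theory.

(* (a) If some gamma >= J check nodes cover fewer than gamma + k variable nodes, more than
   m - gamma columns of H vanish on those gamma rows, hence live in the remaining m - gamma
   coordinates; any m - gamma + 1 of them are dependent, giving a codeword of weight
   m - gamma + 1 < d.
   (b) Conversely, the covering condition is Hall's condition for every set of fewer than d
   variable nodes, so the support of a light codeword matches into the check nodes along
   edges. Filling the edges of the graph one at a time, each new entry is chosen away from
   the root of every minor it touches (such a minor is affine in the entry); then every
   square submatrix with a matching on its diagonal is invertible, and the codeword,
   restricted to its support, lies in the kernel of one of them. *)

Section Hall.
Variables (I J : finType) (r : I -> J -> bool).
Implicit Types (A B C : {set I}) (R Y : {set J}) (f : I -> J).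

Definition rnbhd (R : {set J}) (B : {set I}) : {set J} :=
  [set j in R | [exists i in B, r i j]].

Definition matches (A : {set I}) (R : {set J}) (f : I -> J) :=
  {in A &, injective f} /\ {in A, forall i, (f i \in R) && r i (f i)}.

Definition hall_cond (A : {set I}) (R : {set J}) :=
  forall B : {set I}, B \subset A -> #|B| <= #|rnbhd R B|.

Lemma rnbhdU R B C : rnbhd R (B :|: C) = rnbhd R B :|: rnbhd R C.
Proof.
apply/setP=> j; rewrite !inE -andb_orr; congr (_ && _).
apply/existsP/orP => [[i /andP[]]|[|]/existsP[i /andP[iB rij]]].
- by rewrite inE => /orP[] iB rij; [left|right]; apply/existsP; exists i; rewrite iB.
- by exists i; rewrite inE iB.
- by exists i; rewrite inE iB orbT.
Qed.

Lemma rnbhdD R Y B : rnbhd (R :\: Y) B = rnbhd R B :\: Y.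
Proof. by apply/setP=> j; rewrite !inE andbA. Qed.

Lemma matches_rnbhd A R f : matches A R f -> matches A (rnbhd R A) f.
Proof.
case=> injf fA; split=> // i iA; have /andP[fR rif] := fA i iA.
by rewrite rif inE fR andbT; apply/existsP; exists i; rewrite iA.
Qed.

Lemma matches_glue A B R Y f1 f2 :
    B \subset A -> Y \subset R -> matches B Y f1 -> matches (A :\: B) (R :\: Y) f2 ->
  matches A R (fun i => if i \in B then f1 i else f2 i).
Proof.
move=> sBA sYR [inj1 f1B] [inj2 f2AB].
have f1P i : i \in B -> (f1 i \in R) && r i (f1 i) && (f1 i \in Y).
  by move=> iB; case/andP: (f1B i iB) => /[dup] /(subsetP sYR) -> -> ->.
have f2P i : i \in A -> i \notin B -> (f2 i \in R) && r i (f2 i) && (f2 i \notin Y).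
  by move=> iA iB; have := f2AB i; rewrite !inE iB iA => /(_ isT) /andP[/andP[-> ->] ->].
split=> [i i' iA i'A|i iA]; last by case: ifPn => iB; [case/andP: (f1P i iB) | case/andP: (f2P i iA iB)].
case: ifPn => iB; case: ifPn => i'B; first exact: inj1.
- move=> e; have /andP[_ f1Y] := f1P i iB; have /andP[_ f2Y] := f2P i' i'A i'B.
  by rewrite -e f1Y in f2Y.
- move=> e; have /andP[_ f1Y] := f1P i' i'B; have /andP[_ f2Y] := f2P i iA iB.
  by rewrite e f1Y in f2Y.
by apply: inj2; rewrite inE ?iB ?i'B.
Qed.

Lemma hall_cond_sub A B R : B \subset A -> hall_cond A R -> hall_cond B R.
Proof. by move=> sBA hA C sCB; apply/hA/(subset_trans sCB). Qed.

Lemma hall_cond_tight A B R :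
    hall_cond A R -> B \subset A -> #|rnbhd R B| = #|B| ->
  hall_cond (A :\: B) (R :\: rnbhd R B).
Proof.
move=> hA sBA tight C sCAB; rewrite rnbhdD.
have CB0 : C :&: B = set0.
  by apply/setP=> i; rewrite !inE; apply/andP=> -[/(subsetP sCAB)]; rewrite inE => /andP[/negPf->].
have := hA (C :|: B); rewrite subUset sBA (subset_trans sCAB (subsetDl A B)) => /(_ isT).
rewrite rnbhdU cardsU CB0 cards0 subn0.
have := cardsU (rnbhd R C) (rnbhd R B); have := cardsD (rnbhd R C) (rnbhd R B).
have := subset_leq_card (subsetIl (rnbhd R C) (rnbhd R B)); rewrite tight; lia.
Qed.

Lemma hall_cond_slack A R i0 j :
    hall_cond A R -> i0 \in A ->
    (forall B, B \proper A -> B != set0 -> #|B| < #|rnbhd R B|) ->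
  hall_cond (A :\ i0) (R :\ j).
Proof.
move=> hA i0A slack C sCA; have [->|C0] := eqVneq C set0; first by rewrite cards0.
have sCA' : C \subset A := subset_trans sCA (subsetDl A _).
have i0C : i0 \notin C by apply: contraTN i0A => /(subsetP sCA); rewrite !inE eqxx.
have ltC := slack C _ C0; rewrite properE sCA' in ltC.
have {}ltC : #|C| < #|rnbhd R C|.
  by apply: ltC; apply: contraNN i0C => /subsetP/(_ i0 i0A).
by rewrite rnbhdD; have := cardsD1 j (rnbhd R C); rewrite setDE -setDE; lia.
Qed.

Theorem hall_marriage (j0 : J) A R : hall_cond A R -> exists f, matches A R f.
Proof.
have [N] := ubnP #|A|; elim: N A R => // N IH A R ltAN hA.
have [->|/set0Pn[i0 i0A]] := eqVneq A set0.
  by exists (fun=> j0); split=> i; rewrite inE.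
case: (boolP [exists B : {set I}, [&& B \proper A, B != set0 & #|rnbhd R B| == #|B|]]).
  case/existsP=> B /and3P[ltBA B0 /eqP tight]; have sBA := proper_sub ltBA.
  have [f1 /matches_rnbhd f1B] : exists f, matches B R f.
    by apply: IH (hall_cond_sub sBA hA); apply: leq_trans (proper_card ltBA) _.
  have [f2 f2AB] : exists f, matches (A :\: B) (R :\: rnbhd R B) f.
    apply: IH (hall_cond_tight hA sBA tight).
    rewrite cardsD (setIidPr sBA); move: ltAN B0 (subset_leq_card sBA); rewrite -card_gt0; lia.
  by eexists; apply: matches_glue f1B f2AB => //; apply/subsetP=> j; rewrite inE => /andP[].
move/existsPn=> notight.
have [j /setIdP[jR /existsP[i /andP[]]]] : exists j, j \in rnbhd R [set i0].
  by apply/card_gt0P; apply: leq_trans (hA _ _); rewrite ?cards1 ?sub1set.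
rewrite inE => /eqP-> ri0j.
have slack B : B \proper A -> B != set0 -> #|B| < #|rnbhd R B|.
  move=> ltBA B0; have := notight B; rewrite ltBA B0 ltn_neqAle hA ?proper_sub //=.
  by rewrite eq_sym andbT.
have [f f'A] : exists f, matches (A :\ i0) (R :\ j) f.
  apply: IH (hall_cond_slack j hA i0A slack).
  by move: ltAN; rewrite (cardsD1 i0 A) i0A.
exists (fun i => if i \in [set i0] then j else f i); apply: matches_glue f'A => //.
- by rewrite sub1set.
- by rewrite sub1set.
- split=> [x y|x]; rewrite !inE; first by move=> /eqP-> /eqP->.
  by move=> /eqP->; rewrite eqxx.
Qed.

End Hall.

Local Open Scope ring_scope.

Section Codewords.
Variables (F : fieldType) (m n : nat) (H : 'M[F]_(m, n)).

Definition rows_meeting (U : {set 'I_n}) : {set 'I_m} :=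
  [set j | [exists i in U, H j i != 0]].

Lemma rank_colsub_le (U : {set 'I_n}) :
  (\rank (colsub (enum_val : 'I_#|U| -> 'I_n) H)
     <= #|rows_meeting U|)%N.
Proof.
set K := colsub _ H; set V := rows_meeting U.
apply: leq_trans (rank_leq_row (rowsub (enum_val : 'I_#|V| -> 'I_m) K)).
apply/mxrankS/row_subP=> j; have [jV|jV] := boolP (j \in V).
  by rewrite -(enum_rankK_in jV jV) -row_rowsub row_sub.
suff -> : row j K = 0 by rewrite sub0mx.
apply/rowP=> l; rewrite !mxE; apply: contraNeq jV => Hjl.
by rewrite inE; apply/existsP; exists (enum_val l); rewrite enum_valP.
Qed.

Lemma codeword_supported_on (U : {set 'I_n}) :
    (#|rows_meeting U| < #|U|)%N ->
  exists y : 'rV[F]_n, [/\ y *m H^T = 0, y != 0 & [set i | y 0 i != 0] \subset U].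
Proof.
move=> ltVU; pose g : 'I_#|U| -> 'I_n := enum_val.
have /rowV0Pn[z /sub_kermxP zK z0] : kermx (colsub g H)^T != 0.
  by rewrite -mxrank_eq0 mxrank_ker mxrank_tr; move: (rank_colsub_le U) ltVU; rewrite /g; lia.
pose y := z *m rowsub g 1%:M.
have yE i : y 0 i = \sum_l z 0 l * (g l == i)%:R.
  by rewrite mxE; apply: eq_bigr => l _; rewrite !mxE.
exists y; split.
- by rewrite -mulmxA -rowsubE -trmx_mxsub.
- apply: contraNneq z0 => y0; apply/eqP/rowP=> l; rewrite mxE.
  have := congr1 (fun v : 'rV_n => v 0 (g l)) y0; rewrite yE mxE (bigD1 l) //= eqxx mulr1.
  by rewrite big1 ?addr0 // => l' /negPf nl'; rewrite (inj_eq enum_val_inj) nl' mulr0.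
- apply/subsetP=> i; rewrite inE yE; apply: contraR => iU.
  rewrite big1 // => l _; case: eqP => [gl|]; last by rewrite mulr0.
  by case/negP: iU; rewrite -gl enum_valP.
Qed.

Lemma codeword_eq0 (y : 'rV[F]_n) (A : {set 'I_n}) (f : 'I_#|A| -> 'I_m) :
    y *m H^T = 0 -> [set i | y 0 i != 0] \subset A ->
    \det (mxsub f enum_val H) != 0 ->
  y = 0.
Proof.
move=> yH suppy; set M := mxsub f _ H => detM.
pose z : 'rV[F]_#|A| := \row_l y 0 (enum_val l).
have yA i : i \notin A -> y 0 i = 0.
  by move=> iA; apply/eqP; apply: contraNT iA => yi; apply: (subsetP suppy); rewrite inE.
have zM : z *m M^T = 0.
  apply/rowP=> r; rewrite [RHS]mxE.
  transitivity ((y *m H^T) 0 (f r)); last by rewrite yH mxE.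
  rewrite !mxE [RHS](bigID (mem A)) /= [X in _ = _ + X]big1 ?addr0 => [|i /yA->].
    by rewrite [RHS]big_enum_val; apply: eq_bigr => l _; rewrite !mxE.
  by rewrite mul0r.
have unitMt : M^T \in unitmx by rewrite unitmx_tr unitmxE unitfE.
have z0 : z = 0 by rewrite -(mulmxK unitMt z) zM mul0mx.
apply/rowP=> i; rewrite mxE; have [iA|/yA//] := boolP (i \in A).
by have /rowP/(_ (enum_rank_in iA i)) := z0; rewrite !mxE enum_rankK_in.
Qed.

End Codewords.

Lemma cover_cond_of_min_dist (F : fieldType) m n k d (H : 'M[F]_(m, n)) (T : bigraph m n) :
  (m + k)%N = n -> is_tanner H T -> min_dist_ge H d -> cover_cond T k (m.+2 - d).
Proof.
move=> mkn tanH mdH S /andP[leJS leSm]; rewrite leqNgt; apply/negP=> ltNS.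
have [s [uniq_s size_s sNS]] :
    exists s, [/\ uniq s, size s = (m - #|S|).+1 & {subset s <= ~: nbhd T S}].
  by apply/card_geqP; move: (cardsC (nbhd T S)) ltNS leSm; rewrite card_ord; lia.
set U := [set i in s].
have rowsU : rows_meeting H U \subset ~: S.
  apply/subsetP=> j; rewrite !inE => /existsP[i /andP[iU Hji]]; apply/negP=> jS.
  rewrite inE in iU; have := sNS i iU; rewrite !inE => /negP; apply.
  by apply/existsP; exists j; rewrite jS tanH.
have cardU : #|U| = (m - #|S|).+1 by rewrite cardsE (card_uniqP uniq_s).
have [y [yH y0 suppy]] : exists y : 'rV[F]_n,
    [/\ y *m H^T = 0, y != 0 & [set i | y 0 i != 0] \subset U].
  apply: codeword_supported_on; rewrite cardU ltnS.
  by apply: leq_trans (subset_leq_card rowsU) _; move: (cardsC S); rewrite card_ord; lia.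
have := leq_trans (mdH y yH y0) (subset_leq_card suppy).
by rewrite cardU; move: leJS leSm; lia.
Qed.

Lemma det_add_delta (R : comNzRingType) a (M : 'M[R]_a) i j (x : R) :
  \det (M + x *: delta_mx i j) = \det M + x * cofactor M i j.
Proof.
rewrite !(expand_det_row _ i).
have cofE j' : cofactor (M + x *: delta_mx i j) i j' = cofactor M i j'.
  rewrite /cofactor; congr (_ * \det _); apply/matrixP=> r c.
  by rewrite !mxE eq_sym (negPf (neq_lift i r)) mulr0 addr0.
under eq_bigr do rewrite cofE !mxE mulrDl.
rewrite big_split /=; congr (_ + _).
rewrite (bigD1 j) //= !eqxx mulr1 big1 ?addr0 // => j' /negPf->.
by rewrite andbF mulr0 mul0r.
Qed.

Section SubmatrixOfDelta.
Variables (R : nzRingType) (m n a : nat) (f : 'I_a -> 'I_m) (g : 'I_a -> 'I_n).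

Lemma mxsub_delta k l :
  injective f -> injective g -> mxsub f g (delta_mx (f k) (g l)) = delta_mx k l :> 'M[R]_a.
Proof. by move=> injf injg; apply/matrixP=> r c; rewrite !mxE !inj_eq. Qed.

Lemma mxsub_delta_eq0 j i :
  (forall k l, (f k, g l) != (j, i)) -> mxsub f g (delta_mx j i) = 0 :> 'M[R]_a.
Proof.
move=> miss; apply/matrixP=> r c; rewrite !mxE.
by have := miss r c; rewrite xpair_eqE => /negPf->.
Qed.

End SubmatrixOfDelta.

Lemma affine_neq0 (F : fieldType) (a b x : F) :
  (a != 0) || (b != 0) -> x != - a / b -> a + x * b != 0.
Proof.
move=> ab0 xab; have [b0|b0] := eqVneq b 0.
  by move: ab0; rewrite b0 eqxx orbF mulr0 addr0.
apply: contraNneq xab => /eqP; rewrite addrC addr_eq0 => /eqP<-.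
by rewrite mulfK.
Qed.

Section GenericMatrices.
Variables (F : fieldType) (m n : nat).
Implicit Types (H E : 'M[F]_(m, n)) (P Q : 'I_m -> 'I_n -> bool).

Definition generic_on H P :=
  forall a (f : 'I_a -> 'I_m) (g : 'I_a -> 'I_n), injective f -> injective g ->
  (forall l, P (f l) (g l)) -> \det (mxsub f g H) != 0.

Lemma generic_onS H P Q : (forall j i, P j i -> Q j i) -> generic_on H Q -> generic_on H P.
Proof. by move=> sPQ genH a f g injf injg Pfg; apply: genH => // l; apply/sPQ/Pfg. Qed.

(* When E is a matrix unit, \det (mxsub f g (H + x *: E)) is affine in x; this is its
   root (a junk value when the slope vanishes). *)
Definition det_root H E a (f : 'I_a -> 'I_m) (g : 'I_a -> 'I_n) : F :=
  - \det (mxsub f g H) / (\det (mxsub f g (H + E)) - \det (mxsub f g H)).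

Lemma generic_on_add_delta H P j i x :
    generic_on H P ->
    (forall a (f : 'I_a -> 'I_m) g, injective f -> injective g ->
       x != det_root H (delta_mx j i) f g) ->
  generic_on (H + x *: delta_mx j i) (fun j' i' => ((j', i') == (j, i)) || P j' i').
Proof.
move=> genH xgood a f g injf injg Pfg; set E := delta_mx j i; set M := mxsub f g H.
have subE y : mxsub f g (H + y *: E) = M + y *: mxsub f g E by apply/matrixP=> r c; rewrite !mxE.
have PfgE l : (f l, g l) != (j, i) -> P (f l) (g l).
  by move=> ne; have := Pfg l; rewrite (negPf ne).
suff [c [detE c_or]] : exists c, (forall y, \det (mxsub f g (H + y *: E)) = \det M + y * c)
                                /\ ((\det M != 0) || (c != 0)).
  have := xgood a f g injf injg; rewrite /det_root -/M.
  have := detE 1; rewrite scale1r mul1r => ->; rewrite addrAC subrr add0r.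
  by rewrite detE; apply: affine_neq0.
case: (pickP (fun kl : 'I_a * 'I_a => (f kl.1, g kl.2) == (j, i))) => [[k l] /eqP[fk gl]|miss].
  exists (cofactor M k l); split.
    by move=> y; rewrite subE /E -fk -gl mxsub_delta // det_add_delta.
  have [<-|nkl] := eqVneq k l; last first.
    apply/orP; left; apply: genH => // r; apply: PfgE; apply: contraNneq nkl => -[frj gri].
    apply/eqP; have -> : k = r by apply: injf; rewrite fk frj.
    by apply: injg; rewrite gri gl.
  apply/orP; right; rewrite mulf_neq0 ?signr_eq0 //.
  have -> : row' k (col' k M) = mxsub (f \o lift k) (g \o lift k) H.
    by apply/matrixP=> r c; rewrite !mxE.
  apply: genH => [||r]; try exact: inj_comp (@lift_inj _ k).
  apply: PfgE; apply: contraTneq (neq_lift k r) => -[frj _].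
  by rewrite negbK; apply/eqP/injf; rewrite fk frj.
exists 0; split=> [y|]; last by rewrite eqxx orbF; apply: genH => // r; apply/PfgE/negbT/(miss (r, r)).
by rewrite subE mxsub_delta_eq0 ?scaler0 ?mulr0 ?addr0 // => k l; apply/negbT/(miss (k, l)).
Qed.

End GenericMatrices.

(* Indexes the square submatrices [mxsub f g] of an [m x n] matrix (injectivity forces
   [a <= m]); its size bounds the number of values a new entry must avoid. *)
Definition minor_index m n : finType :=
  {a : 'I_m.+1 & ({ffun 'I_a -> 'I_m} * {ffun 'I_a -> 'I_n})%type}.

Lemma avoid_det_roots (F : finFieldType) m n (H E : 'M[F]_(m, n)) :
    (#|minor_index m n| + 2 <= #|F|)%N ->
  exists2 x : F, x != 0 &
    forall a (f : 'I_a -> 'I_m) g, injective f -> x != det_root H E f g.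
Proof.
move=> bigF; pose root (d : minor_index m n) := det_root H E (projT2 d).1 (projT2 d).2.
have /card_gt0P[x] : (0 < #|~: ((0%R : F) |: [set root d | d in setT])|)%N.
  rewrite cardsCs setCK cardsU1 subn_gt0; apply: leq_trans bigF.
  by rewrite addn2 ltnS addnC -addn1 leq_add ?leq_b1 // -cardsT leq_imset_card.
rewrite !inE negb_or => /andP[x0 xroot]; exists x => // a f g injf.
have lt_am : (a < m.+1)%N by rewrite ltnS; have := leq_card f injf; rewrite !card_ord.
apply: contraNneq xroot => ->; apply/imsetP.
exists (existT _ (Ordinal lt_am) ([ffun l => f l], [ffun l => g l])) => //.
by rewrite /root /det_root /= !mxsub_ffun.
Qed.

Lemma exists_generic (F : finFieldType) m n (P : 'I_m -> 'I_n -> bool) :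
    (#|minor_index m n| + 2 <= #|F|)%N ->
  exists H : 'M[F]_(m, n), (forall j i, (H j i != 0) = P j i) /\ generic_on H P.
Proof.
move=> bigF; set s := [seq p <- enum [set: 'I_m * 'I_n] | P p.1 p.2].
have memP j i : ((j, i) \in s) = P j i by rewrite mem_filter mem_enum inE andbT.
suff [H [suppH genH]] : exists H : 'M[F]_(m, n),
    (forall j i, (H j i != 0) = ((j, i) \in s)) /\ generic_on H (fun j i => (j, i) \in s).
  exists H; split=> [j i|]; first by rewrite suppH memP.
  by apply: generic_onS genH => j i; rewrite memP.
elim: s {memP} => [|[j i] s [H [suppH genH]]].
  exists 0; split=> [j i|[|a] f g _ _ Pfg]; first by rewrite mxE eqxx.
    by rewrite det_mx00 oner_neq0.
  by have := Pfg ord0.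
have [ji_s|ji_s] := boolP ((j, i) \in s).
  exists H; split=> [j' i'|]; first by rewrite suppH in_cons; case: eqP => // -[-> ->].
  by apply: generic_onS genH => j' i'; rewrite in_cons; case: eqP => // -[-> ->].
have [x x0 xgood] := avoid_det_roots H (delta_mx j i) bigF.
exists (H + x *: delta_mx j i); split=> [j' i'|].
  rewrite !mxE in_cons; have [[-> ->]|ne] /= := eqVneq (j', i') (j, i).
    have Hji : H j i = 0 by apply/eqP; move: ji_s; rewrite -suppH negbK.
    by rewrite Hji !eqxx mulr1 add0r.
  by rewrite -xpair_eqE (negPf ne) mulr0 addr0 suppH.
apply: generic_onS (generic_on_add_delta genH _) => [j' i'|a f g injf injg].
  by rewrite in_cons.
exact: xgood.
Qed.

Lemma hall_cond_of_cover m n k d (T : bigraph m n) (A : {set 'I_n}) :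
    (m + k)%N = n -> cover_cond T k (m.+2 - d) -> (#|A| < d)%N ->
  hall_cond (fun i j => T j i) A setT.
Proof.
move=> mkn coverT ltAd B sBA; rewrite leqNgt; apply/negP=> ltCB.
set C := rnbhd _ _ B in ltCB *.
have ltBd := leq_ltn_trans (subset_leq_card sBA) ltAd.
have cardC := cardsC C; rewrite card_ord in cardC.
have /coverT : (m.+2 - d <= #|~: C| <= m)%N by apply/andP; split; lia.
have : nbhd T (~: C) \subset ~: B.
  apply/subsetP=> i; rewrite !inE => /existsP[j /andP[]]; rewrite inE => jC Tji.
  by apply: contraNN jC => iB; rewrite !inE; apply/existsP; exists i; rewrite iB.
move=> /subset_leq_card sNB /leq_trans/(_ sNB) covB.
by have := leq_add ltCB covB; rewrite addSn addnA cardC mkn cardsC card_ord ltnn.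
Qed.

Lemma min_dist_of_generic (F : fieldType) m n k d (H : 'M[F]_(m, n)) (T : bigraph m n) :
  (m + k)%N = n -> cover_cond T k (m.+2 - d) -> generic_on H T -> min_dist_ge H d.
Proof.
move=> mkn coverT genH y yH y0; rewrite leqNgt; apply/negP=> small.
set A := [set i | y 0 i != 0] in small.
have hallA := hall_cond_of_cover mkn coverT small.
have [i0 yi0] := rV0Pn _ y0.
have /card_gt0P[j0 _] : (0 < #|rnbhd (fun i j => T j i) setT [set i0]|)%N.
  by apply: leq_trans (hallA _ _); rewrite ?cards1 // sub1set inE.
have [f [injf fA]] := hall_marriage j0 hallA.
pose g : 'I_#|A| -> 'I_n := enum_val.
have gA l : g l \in A := enum_valP l.
suff : y = 0 by apply/eqP.
apply: (codeword_eq0 (f := f \o g) yH (subxx _)); apply: genH.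
- by move=> l l' /(injf _ _ (gA l) (gA l')) /enum_val_inj.
- exact: enum_val_inj.
- by move=> l; case/andP: (fA _ (gA l)).
Qed.

Theorem lemma2 (n k d : nat) (hkn : (k < n)%N) (hk : (1 <= k)%N) (hd : (2 <= d)%N)
  (hJ : (1 <= (n - k).+2 - d)%N) :
  (forall (F : finFieldType) (H : 'M[F]_(n - k, n)) (T : bigraph (n - k) n),
      row_free H -> is_tanner H T -> min_dist_ge H d ->
      cover_cond T k ((n - k).+2 - d))
  /\
  (forall T : bigraph (n - k) n,
      cover_cond T k ((n - k).+2 - d) ->
      exists Q : nat, forall F : finFieldType, (Q <= #|F|)%N ->
        exists H : 'M[F]_(n - k, n), is_tanner H T /\ min_dist_ge H d).
Proof.
have mkn : (n - k + k)%N = n by rewrite subnK // ltnW.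
split=> [F H T _ tanH mdH | T coverT]; first exact: cover_cond_of_min_dist mkn tanH mdH.
exists (#|minor_index (n - k) n| + 2)%N => F bigF.
have [H [suppH genH]] := exists_generic T bigF.
by exists H; split=> [j i|]; [rewrite suppH | exact: min_dist_of_generic mkn coverT genH].
Qed.
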